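(* For every $v\in\mathcal{K}\setminus\mathcal{Y}_{\mu_1}$ and every $w\in C_v^+\cap\mathcal{K}$ with $w\neq v$, we have $\nabla f_0(w)\cdot(w-v)>0$.
   Context: $\mathcal{K}\subset\mathbb{R}^q$ is an open, bounded, convex set with $0\in\mathcal{K}$. $f:\mathcal{K}\to\mathbb{R}$ is $C^2$ with $D^2f\ge -MI_q$ ($M\ge0$) and $f(v)\to\infty$ as $v\to\partial\mathcal{K}$, $v\in\mathcal{K}$; set $f_0(v)=f(v)+\frac M2|v|^2$, a convex $C^2$ function on $\mathcal{K}$ tending to $\infty$ at $\partial\mathcal{K}$. Let $g:\mathbb{S}^{q-1}\to(0,\infty)$ be the Lipschitz function such that $\nu\mapsto g(\nu)\nu$ parametrizes $\partial\mathcal{K}$, and $m_2=\sup g$. Define $G(x)=g(x/|x|)x$ for $x\ne0$, $G(0)=0$, on $\overline{B_1(0)}$, and $\mathcal{Y}_\mu=G(B_\mu(0))$ for $0<\mu<1$. Fix $r_0>0$ and $0<\mu_0<1$ with $\overline{B_{r_0}(0)}\subset\mathcal{Y}_{\mu_0}$. Let $s_0=\max\{f_0(v):v\in\partial B_{r_0}(0)\}$ and fix $\mu_1\in(\mu_0,1)$ such that $f_0(v)\ge 1+s_0$ for all $v\in\mathcal{K}\setminus\mathcal{Y}_{\mu_1}$. Cones: for $v\in\mathcal{K}\setminus\overline{B_{r_0}(0)}$, $C_v^-$ is the closed (solid) half-cone with vertex $v$, axis the ray from $v$ through $0$, and half-aperture $\alpha(v)\in(0,\pi/2)$ with $\sin\alpha(v)=r_0/|v|$;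 $C_v^+=\{v+\xi:\ v-\xi\in C_v^-\}$ is its reflection through $v$. *)

From HB Require Import structures.
From mathcomp Require Import all_boot all_order all_algebra.
From mathcomp Require Import all_classical all_reals all_analysis.
Set Implicit Arguments. Unset Strict Implicit. Unset Printing Implicit Defensive.
Import Order.TTheory GRing.Theory Num.Theory.
Import numFieldNormedType.Exports.
Local Open Scope classical_set_scope.
Local Open Scope ring_scope.

Section Defs.
Variables (R : realType) (q : nat).
Notation V := 'rV[R]_q.

Definition dotp (u v : V) : R := \sum_(i < q) u 0 i * v 0 i.
Definition enorm (u : V) : R := Num.sqrt (dotp u u).

Definition evec (i : 'I_q) : V := delta_mx 0 i.

Definition partial (i : 'I_q) (h : V -> R) : V -> R :=
  fun x => derive h x (evec i).

Definition grad_dot (h : V -> R) (x u : V) : R :=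
  \sum_(i < q) partial i h x * u 0 i.

Definition C2_on (U : set V) (h : V -> R) : Prop :=
  forall x, U x ->
    [/\ {for x, continuous h},
        forall i, derivable h x (evec i) /\ {for x, continuous (partial i h)}
      & forall i j, derivable (partial i h) x (evec j) /\
                    {for x, continuous (partial j (partial i h))}].

(* D^2 h >= - M I on U (Hessian bound) *)
Definition hessian_ge (U : set V) (h : V -> R) (M : R) : Prop :=
  forall x, U x -> forall xi : V,
    \sum_(i < q) \sum_(j < q) xi 0 i * xi 0 j * partial j (partial i h) x
      >= - M * (enorm xi) ^+ 2.

Definition is_convex_set (U : set V) : Prop :=
  forall x y, U x -> U y -> forall t : R, 0 <= t <= 1 ->
    U ((1 - t) *: x + t *: y).

Definition ebounded (U : set V) : Prop :=
  exists r : R, forall x, U x -> enorm x <= r.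

Definition blows_up_at_boundary (U : set V) (h : V -> R) : Prop :=
  forall A : R, exists2 d : R, 0 < d &
    forall v, U v -> (exists b, ~ U b /\ enorm (v - b) < d) -> A < h v.

Definition sphere1 : set V := [set nu | enorm nu = 1].

Definition Gmap (g : V -> R) (x : V) : V :=
  if x == 0 then 0 else g ((enorm x)^-1 *: x) *: x.

Definition Yset (g : V -> R) (mu : R) : set V :=
  Gmap g @` [set x | enorm x < mu].

Definition alpha (r0 : R) (v : V) : R := asin (r0 / enorm v).

(* closed solid half-cone with vertex v, axis the ray from v through 0,
   half-aperture alpha(v): the points v + xi with angle(xi, -v) <= alpha(v) *)
Definition cone_minus (r0 : R) (v : V) : set V :=
  [set x | enorm (x - v) * enorm v * cos (alpha r0 v) <= dotp (x - v) (- v)].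

(* its reflection through v *)
Definition cone_plus (r0 : R) (v : V) : set V :=
  [set v + xi | xi in [set xi | cone_minus r0 v (v - xi)]].

End Defs.

(* Put e := v - w. The cone condition makes the line from w through v,
   continued beyond v, meet the sphere |x| = r0 at a point u = w + T e with
   T > 1; u lies in Y_mu0, which is contained in K, so the segment [w, u]
   lies in K by convexity. Along it phi(t) := f0(w + t e) satisfies
   phi(T) = f0(u) <= s0 < 1 + s0 <= f0(v) = phi(1), so phi' < 0 somewhere in
   [1, T]. As D^2 f0 >= 0, phi' is nondecreasing, hence
   grad f0(w) . e = phi'(0) < 0. The derivative of f along a line is
   obtained from its partial derivatives, whose continuity is what makes the
   chain rule hold. *)

From HB Require Import structures.
From mathcomp Require Import all_boot all_order all_algebra.
From mathcomp Require Import all_classical all_reals all_analysis.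
From mathcomp Require Import ring lra.
Import Order.TTheory GRing.Theory Num.Theory.
Import numFieldNormedType.Exports.
Local Open Scope classical_set_scope.
Local Open Scope ring_scope.

Set Implicit Arguments. Unset Strict Implicit. Unset Printing Implicit Defensive.

Section EuclideanStructure.
Variables (R : realType) (q : nat).
Local Notation V := 'rV[R]_q.
Implicit Types (u v w : V).

Lemma dotpC u v : dotp u v = dotp v u.
Proof. by apply: eq_bigr => i _; rewrite mulrC. Qed.

Lemma dotpDl u v w : dotp (u + v) w = dotp u w + dotp v w.
Proof. by rewrite /dotp -big_split; apply: eq_bigr => i _; rewrite mxE mulrDl. Qed.

Lemma dotpZl (c : R) u v : dotp (c *: u) v = c * dotp u v.
Proof. by rewrite /dotp mulr_sumr; apply: eq_bigr => i _; rewrite mxE mulrA. Qed.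

Lemma dotpNl u v : dotp (- u) v = - dotp u v.
Proof. by rewrite -scaleN1r dotpZl mulN1r. Qed.

Lemma dotpBl u v w : dotp (u - v) w = dotp u w - dotp v w.
Proof. by rewrite dotpDl dotpNl. Qed.

Lemma dotpDr u v w : dotp w (u + v) = dotp w u + dotp w v.
Proof. by rewrite !(dotpC w) dotpDl. Qed.

Lemma dotpZr (c : R) u v : dotp v (c *: u) = c * dotp v u.
Proof. by rewrite !(dotpC v) dotpZl. Qed.

Lemma dotpNr u v : dotp v (- u) = - dotp v u.
Proof. by rewrite !(dotpC v) dotpNl. Qed.

Lemma dotpBr u v w : dotp w (u - v) = dotp w u - dotp w v.
Proof. by rewrite dotpDr dotpNr. Qed.

Lemma dotp_ge0 u : 0 <= dotp u u.
Proof. by apply: sumr_ge0 => i _; rewrite -expr2 sqr_ge0. Qed.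

Lemma sum_mul_evec (F : 'I_q -> R) (i : 'I_q) : \sum_j F j * evec R i 0 j = F i.
Proof.
rewrite (bigD1 i) //= big1 ?addr0; first by rewrite /evec mxE !eqxx mulr1.
by move=> j /negbTE ji; rewrite /evec mxE ji andbF mulr0.
Qed.

Lemma dotp_evecr u (i : 'I_q) : dotp u (evec R i) = u 0 i.
Proof. exact: sum_mul_evec. Qed.

Lemma grad_dot_evecr (h : V -> R) x (i : 'I_q) : grad_dot h x (evec R i) = partial i h x.
Proof. exact: sum_mul_evec. Qed.

Lemma enorm_ge0 u : 0 <= enorm u.
Proof. exact: sqrtr_ge0. Qed.

Lemma enorm_sqr u : enorm u ^+ 2 = dotp u u.
Proof. by rewrite /enorm sqr_sqrtr // dotp_ge0. Qed.

Lemma enormZ (c : R) u : enorm (c *: u) = `|c| * enorm u.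
Proof. by rewrite /enorm dotpZl dotpZr mulrA -expr2 sqrtrM ?sqr_ge0 // sqrtr_sqr. Qed.

Lemma enormN u : enorm (- u) = enorm u.
Proof. by rewrite -scaleN1r enormZ normrN normr1 mul1r. Qed.

Lemma enorm_eq0 u : (enorm u == 0) = (u == 0).
Proof.
apply/idP/eqP => [|->]; last by rewrite /enorm /dotp big1 ?sqrtr0 // => i _; rewrite mxE mulr0.
rewrite sqrtr_eq0 => uu_le0.
have uu0 : dotp u u = 0 by apply/eqP; rewrite eq_le uu_le0 dotp_ge0.
apply/rowP => i; rewrite mxE.
have sq_ge0 j : xpredT j -> 0 <= u 0 j * u 0 j by rewrite -expr2 sqr_ge0.
by move/eqP: (@psumr_eq0P _ _ xpredT _ sq_ge0 uu0 i isT); rewrite mulf_eq0 orbb => /eqP.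
Qed.

Lemma enorm_gt0 u : u != 0 -> 0 < enorm u.
Proof. by move=> u0; rewrite lt_neqAle eq_sym enorm_eq0 u0 enorm_ge0. Qed.

Lemma grad_dotNr (h : V -> R) x u : grad_dot h x (- u) = - grad_dot h x u.
Proof. by rewrite /grad_dot -sumrN; apply: eq_bigr => i _; rewrite mxE mulrN. Qed.

Lemma normr_le_entries u (c : R) : 0 <= c -> (forall i, `|u 0 i| <= c) -> `|u| <= c.
Proof.
move=> c0 uc; rewrite [X in X <= _]/Num.norm /= mx_normrE.
by apply: bigmax_le => // -[a b] _ /=; rewrite (ord1 a) uc.
Qed.

End EuclideanStructure.

Section DerivativesAlongLines.
Variables (R : realType) (q : nat).
Local Notation V := 'rV[R]_q.

Lemma line_quotientE (h : V -> R) (z u : V) (s : R) :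
  (fun t : R => t^-1 *: (((fun r : R => h (z + r *: u)) \o shift s) (t *: 1)
      - h (z + s *: u))) =
  (fun t : R => t^-1 *: ((h \o shift (z + s *: u)) (t *: u) - h (z + s *: u))).
Proof.
apply/funext => t /=; congr (_ *: (h _ - _)).
by rewrite scaler1 scalerDl addrCA addrA.
Qed.

Lemma derivable_lineP (h : V -> R) (z u : V) (s : R) :
  derivable (fun r : R => h (z + r *: u)) s 1 <-> derivable h (z + s *: u) u.
Proof. by rewrite /derivable line_quotientE. Qed.

Lemma derive_line (h : V -> R) (z u : V) (s : R) :
  derive (fun r : R => h (z + r *: u)) s 1 = derive h (z + s *: u) u.
Proof. by rewrite /derive line_quotientE. Qed.

Lemma is_derive_lineP (h : V -> R) (z u : V) (s D : R) :
  is_derive s 1 (fun r : R => h (z + r *: u)) D <->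
  derivable h (z + s *: u) u /\ derive h (z + s *: u) u = D.
Proof.
split=> [[/derivable_lineP dh <-] | [dh <-]]; first by rewrite derive_line.
by apply: DeriveDef; [apply/derivable_lineP | rewrite derive_line].
Qed.

Lemma is_derive_line_shift (h : V -> R) (z u : V) (s D : R) :
  is_derive (0 : R) 1 (fun r : R => h ((z + s *: u) + r *: u)) D ->
  is_derive s 1 (fun r : R => h (z + r *: u)) D.
Proof. by move/is_derive_lineP; rewrite scale0r addr0 => /is_derive_lineP. Qed.

End DerivativesAlongLines.

Lemma MVT_closed (R : realType) (f df : R -> R) (a b : R) : a <= b ->
  (forall x, a <= x <= b -> is_derive x 1 f (df x)) ->
  exists2 c, a <= c <= b & f b - f a = df c * (b - a).
Proof.
move=> ab fd.
have fd' x : x \in `]a, b[ -> is_derive x 1 f (df x).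
  by rewrite in_itv /= => /andP[ax xb]; apply: fd; rewrite !ltW.
have fc : {within `[a, b], continuous f}.
  apply: derivable_within_continuous => x; rewrite in_itv /= => xab.
  by have [] := fd x xab.
by have [c] := MVT_segment ab fd' fc; rewrite in_itv /=; exists c.
Qed.

Lemma MVT_unordered (R : realType) (f df : R -> R) (a b : R) :
  (forall x, Num.min a b <= x <= Num.max a b -> is_derive x 1 f (df x)) ->
  exists2 c, Num.min a b <= c <= Num.max a b & f b - f a = df c * (b - a).
Proof.
have [ab|/ltW ba] := leP a b; first exact: MVT_closed.
move=> /(MVT_closed ba)[c cab E].
by exists c; rewrite // -opprB E -mulrN opprB.
Qed.

Lemma normr_le_between0 (R : realDomainType) (b c : R) :
  Num.min 0 b <= c <= Num.max 0 b -> `|c| <= `|b|.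
Proof.
have [b0|b0] := leP 0 b; move=> /andP[c0 cb].
  by rewrite !ger0_norm // (le_trans c0).
by rewrite !ler0_norm ?lerN2 // ltW.
Qed.

Section DerivativeFromPartials.
Variables (R : realType) (q : nat).
Local Notation V := 'rV[R]_q.
Implicit Types (x d : V) (t : R).

(* The corners of the coordinate staircase from [x] to [x + t *: d]; along
   each of its [q] steps the mean value theorem and the continuity of the
   partial derivatives at [x] control the increment of [h]. *)
Definition stair x d t (n : nat) : V :=
  x + t *: \row_j (if (j < n)%N then d 0 j else 0).

Lemma stair0 x d t : stair x d t 0 = x.
Proof.
rewrite /stair (_ : \row__ _ = 0) ?scaler0 ?addr0 //.
by apply/rowP => j; rewrite !mxE.
Qed.

Lemma stair_end x d t : stair x d t q = x + t *: d.
Proof. by rewrite /stair; congr (_ + _ *: _); apply/rowP => j; rewrite !mxE ltn_ord. Qed.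

Lemma stairS x d t (k : 'I_q) :
  stair x d t k.+1 = stair x d t k + (t * d 0 k) *: evec R k.
Proof.
rewrite /stair -addrA -scalerA -scalerDr; congr (_ + _ *: _).
apply/rowP => j; rewrite !mxE ltnS leq_eqVlt.
have [->|jk] := eqVneq j k; first by rewrite eqxx ltnn /= add0r mulr1.
rewrite (_ : (j == k :> nat) = false) /= ?mulr0 ?addr0 //.
by apply/negbTE; apply: contra jk => /eqP jk; apply/eqP/val_inj.
Qed.

Lemma stair_dist x d t (k : 'I_q) (c : R) : `|c| <= `|t * d 0 k| ->
  `|x - (stair x d t k + c *: evec R k)| <= `|t| * \sum_i `|d 0 i|.
Proof.
have entry_le_sum j : `|d 0 j| <= \sum_i `|d 0 i|.
  by rewrite (bigD1 j) //= lerDl sumr_ge0.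
move=> ck; rewrite opprD addrA /stair opprD addrA subrr add0r.
apply: normr_le_entries; first by rewrite mulr_ge0 // sumr_ge0.
move=> j; rewrite !mxE; have [->|jk] := eqVneq j k.
  rewrite ltnn eqxx /= mulr0 oppr0 add0r mulr1 normrN.
  by rewrite (le_trans ck) // normrM ler_wpM2l.
rewrite andbF mulr0 subr0 normrN normrM ler_wpM2l //.
by case: ifP => _; rewrite ?normr0 ?sumr_ge0.
Qed.

Variables (h : V -> R) (U : set V).
Hypothesis h_partial : forall y, U y -> forall i, derivable h y (evec R i).

Lemma grad_dot_sub_stair x d t :
  grad_dot h x d - t^-1 * (h (x + t *: d) - h x) =
  \sum_(k < q) (partial k h x * d 0 k -
                t^-1 * (h (stair x d t k.+1) - h (stair x d t k))).
Proof.
rewrite sumrB -mulr_sumr -stair_end -[in h x](stair0 x d t).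
by rewrite -(big_mkord xpredT (fun k => h (stair x d t k.+1) - h (stair x d t k)))
   telescope_sumr.
Qed.

Lemma stair_step_error x d t (δ e : R) (k : 'I_q) :
  t != 0 -> `|t| * \sum_i `|d 0 i| < δ ->
  (forall z, ball x δ z -> U z /\ forall i, `|partial i h x - partial i h z| < e) ->
  `|partial k h x * d 0 k - t^-1 * (h (stair x d t k.+1) - h (stair x d t k))|
    <= e * `|d 0 k|.
Proof.
move=> t0 tδ near_x; set z := stair x d t k.
have near_z c : Num.min 0 (t * d 0 k) <= c <= Num.max 0 (t * d 0 k) ->
    U (z + c *: evec R k) /\
    forall i, `|partial i h x - partial i h (z + c *: evec R k)| < e.
  move=> /normr_le_between0 ck; apply: near_x; rewrite -ball_normE /=.
  exact: le_lt_trans (stair_dist x ck) tδ.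
have [c cb E] := MVT_unordered (f := fun c => h (z + c *: evec R k))
    (df := fun c => partial k h (z + c *: evec R k)) (a := 0) (b := t * d 0 k)
  (fun c cb => proj2 (is_derive_lineP _ _ _ _ _)
     (conj (h_partial (near_z c cb).1 (i := k)) erefl)).
rewrite stairS -/z; move: E; rewrite scale0r addr0 subr0 => ->.
rewrite mulrCA mulKf // -mulrBl normrM ler_wpM2r //.
exact/ltW/((near_z c cb).2 k).
Qed.

Lemma is_derive_line_grad_dot0 x d : open U -> U x ->
  (forall i, {for x, continuous (partial i h)}) ->
  is_derive (0 : R) 1 (fun t => h (x + t *: d)) (grad_dot h x d).
Proof.
move=> Uo Ux hc; set S := \sum_i `|d 0 i|.
have S1 : 0 < 1 + S by rewrite ltr_wpDr // sumr_ge0.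
suff cv : (fun t => t^-1 *: (((fun r => h (x + r *: d)) \o shift 0) (t *: 1)
    - h (x + 0 *: d))) @ 0^' --> grad_dot h x d.
  by apply: DeriveDef; [apply/cvg_ex; exists (grad_dot h x d) | exact: cvg_lim cv].
apply/cvgrPdist_le => eps eps0; set e := eps / (1 + S).
have e0 : 0 < e by rewrite divr_gt0.
have : \forall z \near x, U z /\ forall i, `|partial i h x - partial i h z| < e.
  apply: filterI; first exact: open_nbhs_nbhs.
  exact: filter_forall (fun i => (cvgrPdist_lt _ _).1 (hc i) e e0).
move=> /nbhs_ballP[δ /= δ0 near_x].
rewrite near_withinE; apply/nbhs_ballP; exists (δ / (1 + S)) => /=.
  by rewrite divr_gt0.
move=> t; rewrite -ball_normE /= sub0r normrN => tδ t0.
have tS : `|t| * S < δ.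
  apply: le_lt_trans (_ : `|t| * (1 + S) < δ); first by rewrite ler_wpM2l ?lerDr.
  by rewrite -ltr_pdivlMr.
rewrite /= scale0r !addr0 [_ *: 1]mulr1 [_ *: (_ - _)]/GRing.scale /=.
rewrite grad_dot_sub_stair; apply: le_trans (ler_norm_sum _ _ _) _.
apply: le_trans (ler_sum _ (fun k _ => stair_step_error k t0 tS near_x)) _.
by rewrite -mulr_sumr -/S /e mulrAC ler_pdivrMr // ler_pM2l // lerDr.
Qed.

Lemma is_derive_line_grad_dot x d (s : R) : open U -> U (x + s *: d) ->
  (forall i, {for x + s *: d, continuous (partial i h)}) ->
  is_derive s 1 (fun t => h (x + t *: d)) (grad_dot h (x + s *: d) d).
Proof. by move=> Uo Us hc; apply/is_derive_line_shift/is_derive_line_grad_dot0. Qed.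

End DerivativeFromPartials.

Lemma lower_bound_derive_lt0 (R : realType) (phi dphi : R -> R) (a b c : R) :
  b < c -> (forall x, b <= x <= c -> is_derive x 1 phi (dphi x)) ->
  (forall x, b <= x <= c -> dphi a <= dphi x) ->
  phi c < phi b -> dphi a < 0.
Proof.
move=> bc dphiP dphi_ge phi_cb.
have [x xbc E] := MVT_closed (ltW bc) dphiP.
apply: le_lt_trans (dphi_ge x xbc) _.
have cb0 : 0 < c - b by rewrite subr_gt0.
by rewrite -(pmulr_llt0 _ cb0) -E subr_lt0.
Qed.

Lemma is_derive_quadratic (R : realType) (a b c s : R) :
  is_derive s 1 (fun t : R => a + t * b + t ^+ 2 * c) (b + 2 * s * c).
Proof.
pose p : {poly R} := a%:P + b *: 'X + c *: 'X^2.
have -> : (fun t : R => a + t * b + t ^+ 2 * c) = horner p.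
  by apply/funext => t; rewrite /p !hornerD hornerC !hornerZ hornerX hornerXn; ring.
apply: (is_derive_eq (is_derive_poly p s)).
rewrite /p !derivD derivC !derivZ derivX derivXn add0r hornerD !hornerZ.
rewrite hornerMn hornerX hornerC /= ?expr1 ?horner1 ?hornerX.
by rewrite -mulr_natl; ring.
Qed.

Section SquaredNormShift.
Variables (R : realType) (q : nat).
Local Notation V := 'rV[R]_q.

Definition add_sqnorm (M : R) (h : V -> R) (v : V) : R := h v + M / 2 * enorm v ^+ 2.

Lemma is_derive_sqnorm_line (M : R) (z u : V) (s : R) :
  is_derive s 1 (fun t : R => M / 2 * enorm (z + t *: u) ^+ 2)
    (M * (dotp z u + s * dotp u u)).
Proof.
have -> : (fun t : R => M / 2 * enorm (z + t *: u) ^+ 2) =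
  (M / 2) \*: (fun t : R => dotp z z + t * (2 * dotp z u) + t ^+ 2 * dotp u u).
  apply/funext => t /=; rewrite enorm_sqr !(dotpDl, dotpDr, dotpZl, dotpZr).
  by rewrite (dotpC u z); congr (_ * _); ring.
by apply: is_derive_eq; rewrite /GRing.scale /=; field.
Qed.

Variables (K : set V) (f : V -> R) (M : R).
Hypotheses (K_open : open K) (f_C2 : C2_on K f).

Lemma is_derive_C2_line (w e : V) (s : R) : K (w + s *: e) ->
  is_derive s 1 (fun t => f (w + t *: e)) (grad_dot f (w + s *: e) e).
Proof.
move=> Ks; apply: (is_derive_line_grad_dot _ K_open Ks).
  by move=> y Ky i; have [_ fd _] := f_C2 Ky; exact: (fd i).1.
by move=> i; have [_ fd _] := f_C2 Ks; exact: (fd i).2.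
Qed.

Lemma is_derive_add_sqnorm_line (w e : V) (s : R) : K (w + s *: e) ->
  is_derive s 1 (fun t => add_sqnorm M f (w + t *: e))
    (grad_dot f (w + s *: e) e + M * (dotp w e + s * dotp e e)).
Proof.
move=> Ks; rewrite /add_sqnorm.
have -> : (fun t => f (w + t *: e) + M / 2 * enorm (w + t *: e) ^+ 2) =
  (fun t => f (w + t *: e)) + (fun t => M / 2 * enorm (w + t *: e) ^+ 2) by [].
by apply: is_deriveD; [exact: is_derive_C2_line | exact: is_derive_sqnorm_line].
Qed.

Lemma grad_dot_add_sqnorm (z u : V) : K z ->
  grad_dot (add_sqnorm M f) z u = grad_dot f z u + M * dotp z u.
Proof.
move=> Kz.
have partial_add_sqnorm i :
    partial i (add_sqnorm M f) z = partial i f z + M * z 0 i.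
  have Kz0 : K (z + 0 *: evec R i) by rewrite scale0r addr0.
  have [_] := (is_derive_lineP _ _ _ _ _).1 (is_derive_add_sqnorm_line Kz0).
  by rewrite /partial scale0r addr0 mul0r addr0 dotp_evecr grad_dot_evecr => ->.
rewrite /grad_dot /dotp mulr_sumr -big_split /=.
by apply: eq_bigr => i _; rewrite partial_add_sqnorm; ring.
Qed.

Let slope (w e : V) (t : R) : R :=
  grad_dot f (w + t *: e) e + M * (dotp w e + t * dotp e e).

Lemma is_derive_slope_line (w e : V) (s : R) : K (w + s *: e) ->
  is_derive s 1 (slope w e)
    (\sum_i grad_dot (partial i f) (w + s *: e) e * e 0 i + M * dotp e e).
Proof.
move=> Ks.
have dpartial : is_derive s 1 (\sum_i (fun t => partial i f (w + t *: e) * e 0 i))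
    (\sum_i grad_dot (partial i f) (w + s *: e) e * e 0 i).
  apply: is_derive_sum => i.
  have dpartial_i : is_derive s 1 (fun t => partial i f (w + t *: e))
      (grad_dot (partial i f) (w + s *: e) e).
    apply: (is_derive_line_grad_dot _ K_open Ks).
      by move=> y Ky j; have [_ _ fdd] := f_C2 Ky; exact: (fdd i j).1.
    by move=> j; have [_ _ fdd] := f_C2 Ks; exact: (fdd i j).2.
  have -> : (fun t => partial i f (w + t *: e) * e 0 i) =
      e 0 i \*: (fun t => partial i f (w + t *: e)).
    by apply/funext => t /=; rewrite mulrC.
  by rewrite mulrC; apply: is_deriveZ.
have := is_deriveD dpartial (is_derive_quadratic (M * dotp w e) (M * dotp e e) 0 s).
have -> : (\sum_i (fun t => partial i f (w + t *: e) * e 0 i)) +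
    (fun t => M * dotp w e + t * (M * dotp e e) + t ^+ 2 * 0) =
    slope w e.
  by apply/funext => t; rewrite addrfctE fct_sumE /slope /grad_dot /=; ring.
by rewrite mulr0 addr0.
Qed.

Hypothesis f_hessian : hessian_ge K f M.

Lemma hessian_ge_line (y e : V) : K y ->
  0 <= \sum_i grad_dot (partial i f) y e * e 0 i + M * dotp e e.
Proof.
move=> Ky; have := f_hessian Ky e; rewrite enorm_sqr.
have -> : \sum_i \sum_j e 0 i * e 0 j * partial j (partial i f) y =
    \sum_i grad_dot (partial i f) y e * e 0 i.
  apply: eq_bigr => i _; rewrite /grad_dot mulr_suml.
  by apply: eq_bigr => j _; ring.
lra.
Qed.

Lemma slope_line_le (w e : V) (c : R) : 0 <= c ->
  (forall s, 0 <= s <= c -> K (w + s *: e)) -> slope w e 0 <= slope w e c.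
Proof.
move=> c0 Kseg.
have dslope x : x \in `]0, c[ -> is_derive x 1 (slope w e)
    (\sum_i grad_dot (partial i f) (w + x *: e) e * e 0 i + M * dotp e e).
  by rewrite in_itv /= => /andP[x0 xc]; apply/is_derive_slope_line/Kseg; rewrite !ltW.
apply: (@ger0_derive1_ndecr R (slope w e) 0 c) => //.
- by move=> x /dslope [].
- move=> x xc; rewrite derive1E; have [_ ->] := dslope x xc.
  by apply/hessian_ge_line/Kseg; move: xc; rewrite in_itv /= => /andP[x0 xc]; rewrite !ltW.
- apply: derivable_within_continuous => x; rewrite in_itv /= => xc.
  by have [] := is_derive_slope_line (Kseg x xc).
Qed.

Lemma grad_dot_add_sqnorm_lt0 (w e : V) (T : R) : 1 < T ->
  (forall s, 0 <= s <= T -> K (w + s *: e)) ->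
  add_sqnorm M f (w + T *: e) < add_sqnorm M f (w + e) ->
  grad_dot (add_sqnorm M f) w e < 0.
Proof.
move=> T1 Kseg decr.
have T0 : 0 <= T by rewrite ltW // (lt_trans ltr01).
have Kw : K w by have := Kseg 0; rewrite scale0r addr0 lexx; apply.
rewrite grad_dot_add_sqnorm // (_ : _ + _ = slope w e 0); last first.
  by rewrite /slope scale0r addr0 mul0r addr0.
apply: (@lower_bound_derive_lt0 R (fun t => add_sqnorm M f (w + t *: e)) (slope w e) 0 1 T T1).
- move=> x /andP[x1 xT]; apply/is_derive_add_sqnorm_line/Kseg.
  by rewrite xT (le_trans ler01).
- move=> x /andP[x1 xT]; have x0 : 0 <= x by rewrite (le_trans ler01).
  apply: slope_line_le => // s /andP[s0 sx].
  by apply: Kseg; rewrite s0 (le_trans sx).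
- by rewrite scale1r.
Qed.

End SquaredNormShift.

Section ConeGeometry.
Variables (R : realType) (q : nat).
Local Notation V := 'rV[R]_q.

Lemma convex_closure_scale (K : set V) (b : V) (t : R) :
  open K -> is_convex_set K -> K 0 -> closure K b -> 0 <= t < 1 -> K (t *: b).
Proof.
move=> Ko Kc K0 Kb /andP[t0 t1].
have [->|tn0] := eqVneq t 0; first by rewrite scale0r.
have tp : 0 < t by rewrite lt_neqAle eq_sym tn0.
have /nbhs_ballP[rho /= rho0 K_ball] : nbhs (0 : V) K by apply: open_nbhs_nbhs.
have r0 : 0 < rho * (1 - t) / t by rewrite divr_gt0 // mulr_gt0 // subr_gt0.
have [k [Kk]] := Kb _ (@nbhsx_ballx _ _ b _ r0); rewrite -ball_normE /= => bk.
(* [t b] is the convex combination of [k] and a point [z] of the ball around 0 *)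
pose z := (t / (1 - t)) *: (b - k).
have Kz : K z.
  apply: K_ball; rewrite -ball_normE /= sub0r normrN /z normrZ.
  rewrite ger0_norm ?divr_ge0 ?subr_ge0 ?ltW // -ltr_pdivlMl ?divr_gt0 ?subr_gt0 //.
  by rewrite invf_div mulrC mulrA.
suff <- : (1 - t) *: z + t *: k = t *: b by apply: Kc; rewrite ?t0 ?ltW.
rewrite /z scalerA mulrCA divff ?subr_eq0 1?eq_sym ?lt_eqF // mulr1.
by rewrite scalerBr subrK.
Qed.

Lemma convex_segment (K : set V) (w e : V) (T : R) : is_convex_set K ->
  0 < T -> K w -> K (w + T *: e) -> forall s, 0 <= s <= T -> K (w + s *: e).
Proof.
move=> Kc T0 Kw KwT s /andP[s0 sT].
have sT1 : 0 <= s / T <= 1 by rewrite divr_ge0 ?(ltW T0) //= ler_pdivrMr // mul1r.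
have := Kc _ _ Kw KwT _ sT1.
by rewrite scalerDr scalerA mulfVK ?gt_eqF // addrA -scalerDl subrK scale1r.
Qed.

Lemma Yset_subset (K : set V) (g : V -> R) (mu : R) :
  open K -> is_convex_set K -> K 0 ->
  closure K `\` K = [set g nu *: nu | nu in sphere1 (q:=q)] -> mu <= 1 ->
  Yset g mu `<=` K.
Proof.
move=> Ko Kc K0 Kbd mu1 _ [y ymu <-]; rewrite /Gmap.
have [//|y0] := eqVneq y 0.
have yp := enorm_gt0 y0.
set nu := (enorm y)^-1 *: y.
have nu1 : sphere1 nu.
  by rewrite /sphere1 /= /nu enormZ ger0_norm ?invr_ge0 ?enorm_ge0 // mulVf ?gt_eqF.
have [+ _] : (closure K `\` K) (g nu *: nu) by rewrite Kbd; exists nu.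
have -> : g nu *: y = enorm y *: (g nu *: nu).
  by rewrite /nu !scalerA; congr (_ *: _); rewrite mulrC mulrA mulVf ?gt_eqF ?mul1r.
move=> cl; apply: (convex_closure_scale Ko Kc K0 cl).
by rewrite enorm_ge0 (lt_le_trans ymu mu1).
Qed.

Lemma cone_plus_dotp (r0 : R) (v w : V) : 0 <= r0 < enorm v -> cone_plus r0 v w ->
  enorm (w - v) * Num.sqrt (enorm v ^+ 2 - r0 ^+ 2) <= dotp (w - v) v.
Proof.
move=> /andP[r0_ge0 r0v] [xi]; rewrite /cone_minus /= => xi_cone <-.
move: xi_cone; rewrite [v + xi]addrC addrK addrAC subrr add0r.
rewrite enormN dotpNl dotpNr opprK /alpha.
have vp : 0 < enorm v by apply: le_lt_trans r0v.
have r0v1 : r0 / enorm v <= 1 by rewrite ler_pdivrMr // mul1r ltW.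
have r0vN1 : -1 <= r0 / enorm v by rewrite (le_trans (lerN10 _)) ?divr_ge0 // ltW.
rewrite cos_asin ?r0vN1 // -mulrA.
have -> // : enorm v * Num.sqrt (1 - (r0 / enorm v) ^+ 2) =
    Num.sqrt (enorm v ^+ 2 - r0 ^+ 2).
rewrite -[X in X * _](ger0_norm (ltW vp)) -sqrtr_sqr -sqrtrM ?sqr_ge0 //.
by congr Num.sqrt; field; rewrite gt_eqF.
Qed.

Lemma line_meets_sphere (r0 : R) (v xi : V) : 0 <= r0 < enorm v -> xi != 0 ->
  enorm xi * Num.sqrt (enorm v ^+ 2 - r0 ^+ 2) <= dotp xi v ->
  exists2 u : R, 0 < u & enorm (v - u *: xi) = r0.
Proof.
rewrite enorm_sqr => /andP[r0_ge0 r0v] xi0 xi_cone.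
set A := dotp v v; set N := dotp xi xi; set p := dotp xi v.
have Np : 0 < N by rewrite /N -enorm_sqr exprn_gt0 ?enorm_gt0.
have Ar0 : 0 < A - r0 ^+ 2.
  by rewrite /A -enorm_sqr subr_gt0 ltr_pXn2r // nnegrE // (le_trans r0_ge0) // ltW.
have p0 : 0 <= p.
  by apply: le_trans xi_cone; rewrite mulr_ge0 ?enorm_ge0 ?sqrtr_ge0.
(* [u] is the smaller root of [u |-> |v - u xi|^2 - r0^2 = N u^2 - 2 p u + A - r0^2] *)
set D := p ^+ 2 - N * (A - r0 ^+ 2).
have D_le : N * (A - r0 ^+ 2) <= p ^+ 2.
  have -> : N * (A - r0 ^+ 2) = (enorm xi * Num.sqrt (A - r0 ^+ 2)) ^+ 2.
    by rewrite exprMn enorm_sqr sqr_sqrtr // ltW.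
  by rewrite ler_sqr ?nnegrE // mulr_ge0 ?enorm_ge0 ?sqrtr_ge0.
have D0 : 0 <= D by rewrite subr_ge0.
set s := Num.sqrt D.
have sp : s < p.
  have NAr0 : 0 < N * (A - r0 ^+ 2) by rewrite mulr_gt0.
  rewrite -(ger0_norm p0) -sqrtr_sqr ltr_sqrt; last exact: lt_le_trans D_le.
  by rewrite /D ltrBlDr ltrDl.
set u := (p - s) / N; exists u; first by rewrite divr_gt0 // subr_gt0.
have uN : u * N = p - s by rewrite mulfVK // lt0r_neq0.
suff E : dotp (v - u *: xi) (v - u *: xi) = r0 ^+ 2.
  by rewrite /enorm E sqrtr_sqr ger0_norm.
rewrite !(dotpBl, dotpBr, dotpZl, dotpZr) (dotpC v xi) -/A -/N -/p.
apply: (mulIf (lt0r_neq0 Np)).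
have -> : (A - u * p - u * (p - u * N)) * N =
    A * N - 2 * p * (u * N) + (u * N) ^+ 2 by ring.
have sD : s ^+ 2 = D by rewrite sqr_sqrtr.
rewrite uN; transitivity (A * N - p ^+ 2 + s ^+ 2); first by ring.
by rewrite sD /D; ring.
Qed.

Lemma cone_plus_line_meets_sphere (r0 : R) (v w : V) : 0 <= r0 < enorm v ->
  cone_plus r0 v w -> w <> v ->
  exists2 t : R, 0 < t & enorm (v + t *: (v - w)) = r0.
Proof.
move=> r0v w_cone /eqP; rewrite -subr_eq0 => wv.
have [t t0 Et] := line_meets_sphere r0v wv (cone_plus_dotp r0v w_cone).
by exists t; rewrite // -opprB scalerN.
Qed.

End ConeGeometry.

Theorem lemma2p4 (R : realType) (q : nat) (K : set 'rV[R]_q)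
  (f : 'rV[R]_q -> R) (M : R) (g : 'rV[R]_q -> R)
  (r0 mu0 mu1 s0 : R) :
  open K -> ebounded K -> is_convex_set K -> K 0 ->
  C2_on K f -> 0 <= M -> hessian_ge K f M ->
  blows_up_at_boundary K f ->
  let f0 := fun v => f v + M / 2 * (enorm v) ^+ 2 in
  (forall nu, sphere1 nu -> 0 < g nu) ->
  (exists L : R, forall nu1 nu2, sphere1 nu1 -> sphere1 nu2 ->
      `|g nu1 - g nu2| <= L * enorm (nu1 - nu2)) ->
  closure K `\` K = [set g nu *: nu | nu in sphere1 (q:=q)] ->
  0 < r0 -> 0 < mu0 < 1 ->
  [set x | enorm x <= r0] `<=` Yset g mu0 ->
  (exists2 v, enorm v = r0 & f0 v = s0) ->
  (forall v, enorm v = r0 -> f0 v <= s0) ->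
  mu0 < mu1 < 1 ->
  (forall v, K v -> ~ Yset g mu1 v -> 1 + s0 <= f0 v) ->
  forall v, K v -> ~ Yset g mu1 v ->
  forall w, cone_plus r0 v w -> K w -> w <> v ->
  0 < grad_dot f0 w (w - v).
Proof.
move=> K_open _ K_convex K0 f_C2 _ f_hessian _ f0 _ _ K_bd r0_gt0 /andP[_ mu0_lt1]
  ball_sub _ f0_sphere /andP[mu01 _] f0_out v Kv v_out w w_cone Kw wv.
have r0v : 0 <= r0 < enorm v.
  rewrite ltW //= ltNge; apply/negP => vr; apply: v_out.
  by have [y ymu <-] := ball_sub v vr; exists y => //; apply: lt_trans ymu mu01.
set e := v - w.
have [t1 t1_gt0 Eu] := cone_plus_line_meets_sphere r0v w_cone wv.
set T := 1 + t1.
have wTe : w + T *: e = v + t1 *: e.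
  by rewrite /T scalerDl scale1r addrA [w + e]addrC subrK.
have Ku : K (w + T *: e).
  rewrite wTe; apply: (Yset_subset K_open K_convex K0 K_bd (ltW mu0_lt1)).
  by apply: ball_sub; rewrite /= Eu.
have T1 : 1 < T by rewrite ltrDl.
have Kseg := convex_segment K_convex (lt_trans ltr01 T1) Kw Ku.
have decr : add_sqnorm M f (w + T *: e) < add_sqnorm M f (w + e).
  rewrite wTe [w + e]addrC subrK; apply: le_lt_trans (f0_sphere _ Eu) _.
  by apply: lt_le_trans (f0_out v Kv v_out); rewrite ltrDr.
have := grad_dot_add_sqnorm_lt0 K_open f_C2 f_hessian T1 Kseg decr.
by rewrite -[w - v]opprB grad_dotNr oppr_gt0.
Qed.
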